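(* Let $U,V\in GL_n(\mathbb{C})$ and let $D$ be a diagonal $n\times n$ complex matrix. If every principal minor of $VU$ equals $1$, then the Newton polygons of $D$ and $UDV$ coincide.
   Context: For an $n\times n$ complex matrix $M$ with eigenvalues $\mu_1,\dots,\mu_n$ ordered so that $|\mu_1|\ge\dots\ge|\mu_n|$, the Newton polygon of $M$ is the polygonal line joining the points $(-n+k,\, s_1+\dots+s_k)$ for $k=0,\dots,n$, where $s_j=-\log|\mu_j|$ (with values in $\mathbb{R}\cup\{+\infty\}$). *)

From HB Require Import structures.
From mathcomp Require Import all_boot all_order all_algebra.
From mathcomp Require Import complex.
From mathcomp Require Import reals constructive_ereal exp.
Set Implicit Arguments. Unset Strict Implicit. Unset Printing Implicit Defensive.
Import Order.TTheory GRing.Theory Num.Theory.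
Local Open Scope ring_scope.

Section NewtonPolygon.
Variable R : realType.
Local Notation C := (R[i]).

Definition eigen_list n (M : 'M[C]_n) : seq C :=
  sval (closed_field_poly_normal (char_poly M)).

Definition eigenvalues_sorted n (M : 'M[C]_n) : seq C :=
  sort (fun x y : C => `|y| <= `|x|) (eigen_list M).

Definition neglogabs (mu : C) : \bar R :=
  if mu == 0 then +oo%E else (- ln (complex.Re `|mu|))%:E.

(* s_j (j = 1..n), stored 0-indexed. *)
Definition newton_s n (M : 'M[C]_n) (j : nat) : \bar R :=
  neglogabs (nth 0 (eigenvalues_sorted M) j).

(* The Newton polygon of M: the polygonal line joining the points
   (-n + k, s_1 + ... + s_k), k = 0..n, represented by its list of vertices. *)
Definition newton_polygon n (M : 'M[C]_n) : seq (R * \bar R) :=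
  [seq (k%:R - n%:R, (\sum_(j < k) newton_s M j)%E) | k <- iota 0 n.+1].

Definition principal_minor n (M : 'M[C]_n) (S : {set 'I_n}) : C :=
  \det (\matrix_(i < #|S|, j < #|S|)
          M (@enum_val _ (mem S) i) (@enum_val _ (mem S) j)).

End NewtonPolygon.

From HB Require Import structures.
From mathcomp Require Import all_boot all_order all_algebra.
From mathcomp Require Import complex.
From mathcomp Require Import reals constructive_ereal exp.
From mathcomp Require Import perm.
Set Implicit Arguments. Unset Strict Implicit. Unset Printing Implicit Defensive.
Import Order.TTheory GRing.Theory Num.Theory.
Local Open Scope ring_scope.

(* The Newton polygon only depends on the characteristic polynomial, and
   [U D V] is similar to [D (V U)].  Expanding [det (X - D M)] row by row shows
   that for diagonal [D] the characteristic polynomial of [D M] is a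
   combination of the principal minors of [M], with coefficients depending on
   [D] only.  When all principal minors of [V U] equal 1, those of the
   identity, [D (V U)] and [D] thus have the same characteristic polynomial. *)

Lemma det_mxsub_perm (F : comNzRingType) m n (e : m = n) (f : 'I_m -> 'I_n)
    (A : 'M[F]_n) :
  injective f -> \det (mxsub f f A) = \det A.
Proof.
case: n / e in f A * => f_inj.
have -> : mxsub f f A = row_perm (perm f_inj) (col_perm (perm f_inj) A).
  by apply/matrixP => i j; rewrite !mxE !permE.
rewrite row_permE col_permE !det_mulmx !det_perm odd_permV.
by rewrite mulrCA -expr2 sqrr_sign mulr1.
Qed.

Lemma mxsub1_inj (F : pzRingType) m n (f : 'I_m -> 'I_n) :
  injective f -> mxsub f f (1%:M : 'M[F]_n) = 1%:M.
Proof. by move=> f_inj; apply/matrixP => i j; rewrite !mxE (inj_eq f_inj). Qed.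

Section RowMix.
Variables (F : comNzRingType) (n : nat).
Implicit Types (A B : 'M[F]_n) (S : {set 'I_n}).

Definition rowmix_mx S A B : 'M[F]_n :=
  \matrix_(i, j) if i \in S then A i j else B i j.

Lemma det_add_rowmix A B : \det (A + B) = \sum_S \det (rowmix_mx S A B).
Proof.
rewrite /determinant.
under eq_bigr => s _.
  rewrite (eq_bigr (fun i => A i (s i) + B i (s i))); last by move=> i _; rewrite mxE.
  rewrite bigA_distr big_distrr /=.
  over.
rewrite exchange_big /=; apply: eq_bigr => S _; apply: eq_bigr => s _.
by congr (_ * _); apply: eq_bigr => i _; rewrite mxE.
Qed.

End RowMix.

Section PrincipalMinors.
Variables (F : comNzRingType) (n : nat).
Implicit Types (D M : 'M[F]_n) (S : {set 'I_n}).

Definition principal_submx S M : 'M[F]_#|S| :=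
  mxsub (@enum_val _ (mem S)) (@enum_val _ (mem S)) M.

Definition split_enum S (x : 'I_(#|S| + #|~: S|)) : 'I_n :=
  match split x with
  | inl i => @enum_val _ (mem S) i
  | inr j => @enum_val _ (mem (~: S)) j
  end.

Lemma split_enum_inj S : injective (@split_enum S).
Proof.
move=> x y; rewrite -[x]splitK -[y]splitK /split_enum !unsplitK.
case: (split x) => [i|j]; case: (split y) => [i'|j'] /=.
- by move/enum_val_inj ->.
- by move=> eq_ij; have := enum_valP j'; rewrite -eq_ij inE (enum_valP i).
- by move=> eq_ij; have := enum_valP j; rewrite eq_ij inE (enum_valP i').
- by move/enum_val_inj ->.
Qed.

Lemma card_split_enum S : (#|S| + #|~: S|)%N = n.
Proof. by rewrite cardsC card_ord. Qed.

(* Listing [S] first, [rowmix_mx S M 1] becomes block upper triangular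
   with diagonal blocks [principal_submx S M] and [1]. *)
Lemma det_rowmix1 S M : \det (rowmix_mx S M 1%:M) = \det (principal_submx S M).
Proof.
rewrite -(det_mxsub_perm (@card_split_enum S) _ (@split_enum_inj S)).
set Q := mxsub _ _ _.
have splitl i : @split_enum S (lshift _ i) = enum_val i.
  by rewrite /split_enum (unsplitK (inl _ i)).
have splitr j : @split_enum S (rshift _ j) = @enum_val _ (mem (~: S)) j.
  by rewrite /split_enum (unsplitK (inr _ j)).
have notinS j : (@enum_val _ (mem (~: S)) j \in S) = false.
  by apply/negbTE; have := enum_valP j; rewrite inE.
have Qdl : dlsubmx Q = 0.
  apply/matrixP => j i; rewrite !mxE splitl splitr notinS.
  by case: eqP => // eq_ji; have := notinS j; rewrite eq_ji (enum_valP i).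
have Qdr : drsubmx Q = 1%:M.
  apply/matrixP => j j'; rewrite !mxE !splitr notinS.
  by rewrite (inj_eq enum_val_inj).
rewrite -(submxK Q) Qdl Qdr det_ublock det1 mulr1; congr (\det _).
by apply/matrixP => i j; rewrite !mxE !splitl (enum_valP i).
Qed.

Lemma char_poly_diag_mul D M : is_diag_mx D ->
  char_poly (D *m M) = \sum_(S : {set 'I_n})
    (\prod_i (if i \in S then - (D i i)%:P else 'X)) *
    (\det (principal_submx S M))%:P.
Proof.
move=> /is_diag_mxP D_diag.
have DM i j : \sum_k D i k * M k j = D i i * M i j.
  rewrite (bigD1 i) //= big1 ?addr0 // => k k_i.
  by rewrite D_diag ?mul0r // eq_sym.
rewrite /char_poly /char_poly_mx addrC det_add_rowmix; apply: eq_bigr => S _.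
pose c := \row_i (if i \in S then - (D i i)%:P else 'X).
have -> : rowmix_mx S (- map_mx polyC (D *m M)) 'X%:M =
          diag_mx c *m map_mx polyC (rowmix_mx S M 1%:M).
  apply/matrixP => i j; rewrite mul_diag_mx !mxE.
  case: (i \in S); first by rewrite DM polyCM mulNr.
  by rewrite polyC_natr mulr_natr.
rewrite det_mulmx det_diag det_map_mx det_rowmix1; congr (_ * _).
by apply: eq_bigr => i _; rewrite mxE.
Qed.

Lemma char_poly_diag_mul_principal D (M1 M2 : 'M[F]_n) : is_diag_mx D ->
  (forall S, \det (principal_submx S M1) = \det (principal_submx S M2)) ->
  char_poly (D *m M1) = char_poly (D *m M2).
Proof.
move=> D_diag eq_minors; rewrite !char_poly_diag_mul //.
by apply: eq_bigr => S _; rewrite eq_minors.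
Qed.

Lemma principal_submx1 S : principal_submx S 1%:M = 1%:M.
Proof. exact/mxsub1_inj/enum_val_inj. Qed.

End PrincipalMinors.

Lemma char_poly_conj (F : comUnitRingType) n (U A : 'M[F]_n) :
  U \in unitmx -> char_poly (U *m A *m invmx U) = char_poly A.
Proof.
move=> U_unit; rewrite /char_poly /char_poly_mx.
have UV : map_mx polyC U *m map_mx polyC (invmx U) = 1%:M.
  by rewrite -map_mxM mulmxV // map_mx1.
have -> : 'X%:M - map_mx polyC (U *m A *m invmx U) =
    map_mx polyC U *m ('X%:M - map_mx polyC A) *m map_mx polyC (invmx U).
  rewrite mulmxBr mulmxBl !map_mxM; congr (_ - _).
  by rewrite mul_mx_scalar -scalemxAl UV scalemx1.
by rewrite !det_mulmx mulrAC -det_mulmx UV det1 mul1r.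
Qed.

Lemma newton_polygon_char_poly (R : realType) n (A B : 'M[R[i]]_n) :
  char_poly A = char_poly B -> newton_polygon A = newton_polygon B.
Proof.
by move=> eq_char; rewrite /newton_polygon /newton_s /eigenvalues_sorted /eigen_list eq_char.
Qed.

Lemma principal_minorE (R : realType) n (M : 'M[R[i]]_n) (S : {set 'I_n}) :
  principal_minor M S = \det (principal_submx S M).
Proof. by []. Qed.

Theorem proposition4p5 (R : realType) (n : nat) (U V D : 'M[R[i]]_n) :
  U \in unitmx -> V \in unitmx -> is_diag_mx D ->
  (forall S : {set 'I_n}, principal_minor (V *m U) S = 1) ->
  newton_polygon D = newton_polygon (U *m D *m V).
Proof.
move=> U_unit _ D_diag minors1; apply: newton_polygon_char_poly.
have -> : U *m D *m V = U *m (D *m (V *m U)) *m invmx U.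
  by rewrite !mulmxA mulmxK.
rewrite char_poly_conj // -{1}(mulmx1 D).
apply: char_poly_diag_mul_principal => // S.
by rewrite principal_submx1 det1 -principal_minorE minors1.
Qed.
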